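(* Let $\mathcal Q$ be a quantaloid. A (possibly large) $\mathcal Q$-category $\mathcal E$ is total if and only if it is (quasi-)injective in $\mathcal Q$-$\mathbf{CAT}$ with respect to fully faithful $\mathcal Q$-functors: for all $\mathcal Q$-functors $F:\mathcal C\to\mathcal E$ and $G:\mathcal C\to\mathcal D$ with $G$ fully faithful, there exists a $\mathcal Q$-functor $H:\mathcal D\to\mathcal E$ with $H\circ G\cong F$.
   Context: A quantaloid is a category whose hom-sets are complete lattices with composition preserving joins in each variable; $v\le w\swarrow u\iff v\circ u\le w$. A $\mathcal Q$-category: class of objects with extents $|X|\in\mathrm{ob}\,\mathcal Q$ and arrows $\mathcal E(X,Y):|X|\to|Y|$ with $1_{|X|}\le\mathcal E(X,X)$, $\mathcal E(Y,Z)\circ\mathcal E(X,Y)\le\mathcal E(X,Z)$. A $\mathcal Q$-functor: $|FX|=|X|$, $\mathcal C(X,Y)\le\mathcal E(FX,FY)$; fully faithful if equality holds; $F\le G$ iff $1_{|X|}\le\mathcal E(FX,GX)$ for all $X$, and $F\cong G$ iff $F\le G\le F$. $\mathcal Q$-$\mathbf{CAT}$ is the (meta)category of $\mathcal Q$-categories and $\mathcal Q$-functors. Presheaves of extent $T$: $\varphi_X:|X|\to T$ with $\varphi_X\circ\mathcal E(X',X)\le\varphi_{X'}$, forming $\mathsf P\mathcal E$ with $\mathsf P\mathcal E(\varphi,\psi)=\bigwedge_X\psi_X\swarrow\varphi_X$; Yoneda $Z\mapsto\mathcal E(-,Z)$; $\mathcal E$ is total if Yoneda has a left adjoint, where $F\dashv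 G$ iff $\mathcal D(FX,Y)=\mathcal E(X,GY)$. *)

Set Implicit Arguments.
Unset Strict Implicit.

Record Quantaloid := {
  qob : Type;
  qhom : qob -> qob -> Type;
  qle : forall a b : qob, qhom a b -> qhom a b -> Prop;
  qle_refl : forall a b (f : qhom a b), qle f f;
  qle_trans : forall a b (f g h : qhom a b), qle f g -> qle g h -> qle f h;
  qle_antisym : forall a b (f g : qhom a b), qle f g -> qle g f -> f = g;
  qsup : forall a b : qob, (qhom a b -> Prop) -> qhom a b;
  qsup_ub : forall a b (S : qhom a b -> Prop) f, S f -> qle f (qsup S);
  qsup_least : forall a b (S : qhom a b -> Prop) g,
      (forall f, S f -> qle f g) -> qle (qsup S) g;
  qid : forall a : qob, qhom a a;
  qcomp : forall a b c : qob, qhom b c -> qhom a b -> qhom a c;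
  qcomp_assoc : forall a b c d (h : qhom c d) (g : qhom b c) (f : qhom a b),
      qcomp h (qcomp g f) = qcomp (qcomp h g) f;
  qcomp_id_l : forall a b (f : qhom a b), qcomp (qid b) f = f;
  qcomp_id_r : forall a b (f : qhom a b), qcomp f (qid a) = f;
  qcomp_sup_l : forall a b c (g : qhom b c) (S : qhom a b -> Prop),
      qcomp g (qsup S) = qsup (fun h => exists f, S f /\ h = qcomp g f);
  qcomp_sup_r : forall a b c (S : qhom b c -> Prop) (f : qhom a b),
      qcomp (qsup S) f = qsup (fun h => exists g, S g /\ h = qcomp g f)
}.

Arguments qhom : clear implicits.
Arguments qle {q a b} _ _.
Arguments qsup {q a b} _.
Arguments qid {q} a.
Arguments qcomp {q a b c} _ _.

Section QuantaloidFacts.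
Variable Q : Quantaloid.

Definition qinf {a b : qob Q} (S : qhom Q a b -> Prop) : qhom Q a b :=
  qsup (fun x => forall y, S y -> qle x y).

(* right implication:  v <= w ↙ u  iff  v ∘ u <= w  (w : a -> c, u : a -> b) *)
Definition qrimp {a b c : qob Q} (w : qhom Q a c) (u : qhom Q a b) : qhom Q b c :=
  qsup (fun v => qle (qcomp v u) w).

Lemma qinf_lb a b (S : qhom Q a b -> Prop) y : S y -> qle (qinf S) y.
Proof. intros Hy. apply qsup_least. intros x Hx. exact (Hx y Hy). Qed.

Lemma qinf_glb a b (S : qhom Q a b -> Prop) x :
  (forall y, S y -> qle x y) -> qle x (qinf S).
Proof. intros H. apply qsup_ub. exact H. Qed.

Lemma qcomp_mono_l a b c (h : qhom Q b c) (f g : qhom Q a b) :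
  qle f g -> qle (qcomp h f) (qcomp h g).
Proof.
  intros Hfg.
  assert (E : g = qsup (fun x => x = f \/ x = g)).
  { apply qle_antisym.
    - apply qsup_ub. now right.
    - apply qsup_least. intros x [->| ->]; [exact Hfg| apply qle_refl]. }
  rewrite E, qcomp_sup_l. apply qsup_ub. exists f. split; [now left| reflexivity].
Qed.

Lemma qcomp_mono_r a b c (f g : qhom Q b c) (h : qhom Q a b) :
  qle f g -> qle (qcomp f h) (qcomp g h).
Proof.
  intros Hfg.
  assert (E : g = qsup (fun x => x = f \/ x = g)).
  { apply qle_antisym.
    - apply qsup_ub. now right.
    - apply qsup_least. intros x [->| ->]; [exact Hfg| apply qle_refl]. }
  rewrite E, qcomp_sup_r. apply qsup_ub. exists f. split; [now left| reflexivity].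
Qed.

Lemma qrimp_intro a b c (w : qhom Q a c) (u : qhom Q a b) v :
  qle (qcomp v u) w -> qle v (qrimp w u).
Proof. intros H. apply qsup_ub. exact H. Qed.

Lemma qrimp_elim a b c (w : qhom Q a c) (u : qhom Q a b) v :
  qle v (qrimp w u) -> qle (qcomp v u) w.
Proof.
  intros H. eapply qle_trans. apply qcomp_mono_r, H.
  unfold qrimp. rewrite qcomp_sup_r. apply qsup_least.
  intros h [g [Hg ->]]. exact Hg.
Qed.

End QuantaloidFacts.

Arguments qinf {Q a b} _.
Arguments qrimp {Q a b c} _ _.

(* The (possibly large) class of objects is presented as a family
   [cob a] of objects of extent [a], for each object [a] of Q;
   so an object X of extent |X| = a is an inhabitant of [cob a]. *)
Record QCat (Q : Quantaloid) := {
  cob : qob Q -> Type;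
  chom : forall a b, cob a -> cob b -> qhom Q a b;
  chom_id : forall a (X : cob a), qle (qid a) (chom X X);
  chom_comp : forall a b c (X : cob a) (Y : cob b) (Z : cob c),
      qle (qcomp (chom Y Z) (chom X Y)) (chom X Z)
}.
Arguments cob {Q} _ _.
Arguments chom {Q} _ {a b} _ _.

Record QFunctor (Q : Quantaloid) (C D : QCat Q) := {
  fobj : forall a, cob C a -> cob D a;
  fmono : forall a b (X : cob C a) (Y : cob C b),
      qle (chom C X Y) (chom D (fobj X) (fobj Y))
}.
Arguments fobj {Q C D} _ {a} _.

Definition fully_faithful (Q : Quantaloid) (C D : QCat Q) (F : QFunctor C D) : Prop :=
  forall a b (X : cob C a) (Y : cob C b), chom C X Y = chom D (fobj F X) (fobj F Y).

Definition qfun_le (Q : Quantaloid) (C D : QCat Q) (F G : QFunctor C D) : Prop :=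
  forall a (X : cob C a), qle (qid a) (chom D (fobj F X) (fobj G X)).

Definition qfun_iso (Q : Quantaloid) (C D : QCat Q) (F G : QFunctor C D) : Prop :=
  qfun_le F G /\ qfun_le G F.

Definition qfun_comp (Q : Quantaloid) (C D E : QCat Q)
  (G : QFunctor D E) (F : QFunctor C D) : QFunctor C E.
Proof.
  refine {| fobj := fun a X => fobj G (fobj F X) |}.
  intros a b X Y. eapply qle_trans. apply (fmono F). apply (fmono G).
Defined.

Definition qadjoint (Q : Quantaloid) (E D : QCat Q)
  (F : QFunctor E D) (G : QFunctor D E) : Prop :=
  forall a b (X : cob E a) (Y : cob D b), chom D (fobj F X) Y = chom E X (fobj G Y).

Section Presheaves.
Variables (Q : Quantaloid) (E : QCat Q).

Definition presheaf (T : qob Q) : Type :=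
  { phi : forall a, cob E a -> qhom Q a T |
    forall a a' (X : cob E a) (X' : cob E a'),
      qle (qcomp (phi a X) (chom E X' X)) (phi a' X') }.

Definition psh_hom T T' (phi : presheaf T) (psi : presheaf T') : qhom Q T T' :=
  qinf (fun v => exists a (X : cob E a),
          v = qrimp (proj1_sig psi a X) (proj1_sig phi a X)).

Lemma psh_hom_id T (phi : presheaf T) : qle (qid T) (psh_hom phi phi).
Proof.
  apply qinf_glb. intros y [a [X ->]]. apply qrimp_intro.
  rewrite qcomp_id_l. apply qle_refl.
Qed.

Lemma psh_hom_comp T1 T2 T3 (phi : presheaf T1) (psi : presheaf T2) (chi : presheaf T3) :
  qle (qcomp (psh_hom psi chi) (psh_hom phi psi)) (psh_hom phi chi).
Proof.
  apply qinf_glb. intros y [a [X ->]]. apply qrimp_intro.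
  rewrite <- qcomp_assoc.
  eapply qle_trans. apply qcomp_mono_l. apply qrimp_elim.
  apply qinf_lb. exists a, X. reflexivity.
  apply qrimp_elim. apply qinf_lb. exists a, X. reflexivity.
Qed.

Definition PCat : QCat Q :=
  {| cob := presheaf; chom := psh_hom; chom_id := psh_hom_id; chom_comp := psh_hom_comp |}.

Definition yoneda_obj c (Z : cob E c) : presheaf c.
Proof.
  exists (fun a X => chom E X Z).
  intros a a' X X'. apply chom_comp.
Defined.

Definition yoneda : QFunctor E PCat.
Proof.
  refine (@Build_QFunctor Q E PCat (yoneda_obj : forall a, cob E a -> cob PCat a) _).
  intros b c Y Z. simpl. apply qinf_glb. intros v [a [X ->]]. simpl.
  apply qrimp_intro. apply chom_comp.
Defined.

End Presheaves.

Definition total (Q : Quantaloid) (E : QCat Q) : Prop :=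
  exists L : QFunctor (PCat E) E, qadjoint L (yoneda E).

(* If E is total with left adjoint L to Yoneda, a functor F : C -> E extends along a fully
   faithful G : C -> D by H d := L (⋁_Z D(GZ,d) ∘ E(-,FZ)): the presheaf in brackets restricts
   along G to E(-,FZ), and L inverts Yoneda. Conversely, extending the identity of E along
   the fully faithful Yoneda embedding yields a functor H with H ∘ y ≅ 1, and such an H is
   automatically left adjoint to y. *)

Set Implicit Arguments.
Unset Strict Implicit.

Section QFunctorOrder.
Variable Q : Quantaloid.

Lemma chom_precomp (E : QCat Q) a b (X X' : cob E a) (Y : cob E b) :
  qle (qid a) (chom E X X') -> qle (chom E X' Y) (chom E X Y).
Proof.
  intros HXX'. eapply qle_trans; [| apply chom_comp].
  eapply qle_trans; [| apply qcomp_mono_l, HXX'].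
  rewrite qcomp_id_r. apply qle_refl.
Qed.

Lemma chom_postcomp (E : QCat Q) a b (X : cob E a) (Y Y' : cob E b) :
  qle (qid b) (chom E Y Y') -> qle (chom E X Y) (chom E X Y').
Proof.
  intros HYY'. eapply qle_trans; [| apply chom_comp].
  eapply qle_trans; [| apply qcomp_mono_r, HYY'].
  rewrite qcomp_id_l. apply qle_refl.
Qed.

Definition qfun_id (E : QCat Q) : QFunctor E E.
Proof. refine {| fobj := fun a X => X |}. intros. apply qle_refl. Defined.

Lemma qfun_le_trans (C D : QCat Q) (F G H : QFunctor C D) :
  qfun_le F G -> qfun_le G H -> qfun_le F H.
Proof.
  intros HFG HGH a X. eapply qle_trans; [exact (HGH a X)|].
  apply chom_precomp, HFG.
Qed.

Lemma qfun_iso_trans (C D : QCat Q) (F G H : QFunctor C D) :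
  qfun_iso F G -> qfun_iso G H -> qfun_iso F H.
Proof.
  intros [HFG HGF] [HGH HHG].
  split; eapply qfun_le_trans; eassumption.
Qed.

Lemma qfun_iso_comp_l (C D E : QCat Q) (H : QFunctor D E) (F G : QFunctor C D) :
  qfun_iso F G -> qfun_iso (qfun_comp H F) (qfun_comp H G).
Proof.
  intros [HFG HGF]; split; intros a X; eapply qle_trans; try apply (fmono H); auto.
Qed.

Lemma qfun_iso_comp_r (C D E : QCat Q) (F G : QFunctor D E) (K : QFunctor C D) :
  qfun_iso F G -> qfun_iso (qfun_comp F K) (qfun_comp G K).
Proof. intros [HFG HGF]; split; intros a X; simpl; auto. Qed.

End QFunctorOrder.

Section YonedaEmbedding.
Variables (Q : Quantaloid) (E : QCat Q).

Lemma qid_le_psh_hom T (phi psi : presheaf E T) :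
  (forall a (X : cob E a), qle (proj1_sig phi a X) (proj1_sig psi a X)) ->
  qle (qid T) (psh_hom phi psi).
Proof.
  intros Hle. apply qinf_glb. intros y [a [X ->]].
  apply qrimp_intro. rewrite qcomp_id_l. apply Hle.
Qed.

Lemma yoneda_lemma T (phi : presheaf E T) a (X : cob E a) :
  psh_hom (yoneda_obj X) phi = proj1_sig phi a X.
Proof.
  apply qle_antisym.
  - eapply qle_trans.
    + apply (qinf_lb (y := qrimp (proj1_sig phi a X) (chom E X X))).
      exists a, X. reflexivity.
    + rewrite <- (qcomp_id_r (qrimp _ _)).
      eapply qle_trans; [apply qcomp_mono_l, chom_id|].
      apply qrimp_elim, qle_refl.
  - apply qinf_glb. intros y [b [Z ->]]. apply qrimp_intro. apply (proj2_sig phi).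
Qed.

Lemma yoneda_fully_faithful : fully_faithful (yoneda E).
Proof. intros a b X Y. symmetry. apply yoneda_lemma. Qed.

Lemma yoneda_left_adjoint_counit (L : QFunctor (PCat E) E) :
  qadjoint L (yoneda E) -> qfun_iso (qfun_comp L (yoneda E)) (qfun_id E).
Proof.
  intros HL. split; intros a X; simpl.
  - rewrite HL. apply psh_hom_id.
  - rewrite yoneda_fully_faithful, <- HL. apply chom_id.
Qed.

Lemma yoneda_left_adjoint_of_retraction (H : QFunctor (PCat E) E) :
  qfun_iso (qfun_comp H (yoneda E)) (qfun_id E) -> qadjoint H (yoneda E).
Proof.
  intros [HyE EHy] T b phi Y.
  assert (phi_le_yH : qle (qid T) (psh_hom phi (yoneda_obj (fobj H phi)))).
  { (* phi_X = PE(yX, phi) <= E(H yX, H phi) <= E(X, H phi) *)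
    apply qid_le_psh_hom. intros a X. simpl.
    rewrite <- (yoneda_lemma phi X).
    eapply qle_trans; [apply (fmono H (yoneda_obj X) phi)|].
    apply chom_precomp, EHy. }
  apply qle_antisym.
  - eapply qle_trans; [apply (fmono (yoneda E))|].
    apply (chom_precomp (E := PCat E)), phi_le_yH.
  - eapply qle_trans; [apply (fmono H)|].
    apply chom_postcomp, HyE.
Qed.

End YonedaEmbedding.

Section Extension.
Variables (Q : Quantaloid) (C D E : QCat Q) (F : QFunctor C E) (G : QFunctor C D).

Definition extension_fun T (d : cob D T) a (X : cob E a) : qhom Q a T :=
  qsup (fun h => exists b (Z : cob C b),
          h = qcomp (chom D (fobj G Z) d) (chom E X (fobj F Z))).

Lemma extension_fun_ub T (d : cob D T) a (X : cob E a) b (Z : cob C b) :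
  qle (qcomp (chom D (fobj G Z) d) (chom E X (fobj F Z))) (extension_fun d X).
Proof. apply qsup_ub. exists b, Z. reflexivity. Qed.

Lemma extension_fun_presheaf T (d : cob D T) a a' (X : cob E a) (X' : cob E a') :
  qle (qcomp (extension_fun d X) (chom E X' X)) (extension_fun d X').
Proof.
  unfold extension_fun at 1. rewrite qcomp_sup_r.
  apply qsup_least. intros h [g [[b [Z ->]] ->]].
  rewrite <- qcomp_assoc.
  eapply qle_trans; [apply qcomp_mono_l, chom_comp | apply extension_fun_ub].
Qed.

Definition extension_obj T (d : cob D T) : presheaf E T :=
  exist _ (extension_fun d) (extension_fun_presheaf d).

Definition extension : QFunctor D (PCat E).
Proof.
  refine (@Build_QFunctor Q D (PCat E) extension_obj _).
  intros a b d d'. apply qinf_glb. intros y [c [X ->]].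
  apply qrimp_intro. simpl. unfold extension_fun at 1. rewrite qcomp_sup_l.
  apply qsup_least. intros h [g [[e [Z ->]] ->]].
  rewrite qcomp_assoc.
  eapply qle_trans; [apply qcomp_mono_r, chom_comp | apply extension_fun_ub].
Defined.

Lemma extension_restrict :
  fully_faithful G -> qfun_iso (qfun_comp extension G) (qfun_comp (yoneda E) F).
Proof.
  intros Gff. split; intros b W; apply qid_le_psh_hom; intros a X; simpl.
  - apply qsup_least. intros h [c [Z ->]]. rewrite <- Gff.
    eapply qle_trans; [apply qcomp_mono_r, (fmono F) | apply chom_comp].
  - eapply qle_trans; [| apply (extension_fun_ub (fobj G W) X W)].
    eapply qle_trans; [| apply qcomp_mono_r, chom_id].
    rewrite qcomp_id_l. apply qle_refl.
Qed.

End Extension.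

Theorem theorem10p1 (Q : Quantaloid) (E : QCat Q) :
  total E <->
  (forall (C D : QCat Q) (F : QFunctor C E) (G : QFunctor C D),
      fully_faithful G ->
      exists H : QFunctor D E, qfun_iso (qfun_comp H G) F).
Proof.
  split.
  - intros [L HL] C D F G Gff.
    exists (qfun_comp L (extension F G)).
    apply (qfun_iso_trans (G := qfun_comp (qfun_comp L (yoneda E)) F)).
    + exact (qfun_iso_comp_l L (extension_restrict F Gff)).
    + exact (qfun_iso_comp_r F (yoneda_left_adjoint_counit HL)).
  - intros Hinj.
    destruct (Hinj E (PCat E) (qfun_id E) (yoneda E) (@yoneda_fully_faithful Q E))
      as [H HyE].
    exists H. exact (yoneda_left_adjoint_of_retraction HyE).
Qed.
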